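(* Let $n\ge1$. Let $X_{2n,2n}$ be the graph with vertices $x_{i,j}$ ($1\le i,j\le 2n$), where $x_{i,j}x_{i',j'}$ is an edge iff $i'=i+1$ and $j\ge j'$. Let $Y_{2n,2n}$ be the graph with vertices $y_{i,j}$ ($1\le i,j\le 2n$) where $y_{i,j}y_{i',j'}$ is an edge iff (1) $i$ odd, $i'=i+1$, $j\ge j'$; or (2) $i$ even, $i'=i+1$, $j<j'$; or (3) $i$ even, $i'$ odd, $i'\ge i+3$; or (4) $i$ odd, $i'=i-1$, $j=1$. Starting from $X_{2n,2n}$, perform successively the pivots on the edges $x_{2n-1,1}x_{2n,1},\ x_{2n-3,1}x_{2n-2,1},\ \dots,\ x_{1,1}x_{2,1}$ (in this order, i.e.\ $n$ pivots on alternate edges of the bottom row, acting from right to left). The resulting graph is (isomorphic to) $Y_{2n,2n}$.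
   Context: For a graph $G=(V,E)$ and $v\in V$, the local complementation $G*v$ is the graph on $V$ with edge set $E\,\triangle\,\{xy: xv,yv\in E,\ x\neq y\}$ (the subgraph induced on the neighbourhood of $v$ is complemented). For an edge $uv$, the pivot of $G$ on $uv$ is $G*u*v*u$; it is known to be symmetric in $u,v$, and its effect is to complement the adjacencies between the three sets $N(u)\cap N(v)$, $N(u)\setminus N(v)$ and $N(v)\setminus N(u)$. In the grids, $i$ is the column index and $j$ the row index, row $1$ being the bottom row. *)

From mathcomp Require Import all_boot.
Set Implicit Arguments. Unset Strict Implicit. Unset Printing Implicit Defensive.

(* Simple graphs are symmetric irreflexive boolean relations on a finType. *)

Definition lc (T : finType) (G : rel T) (v : T) : rel T :=
  fun x y => G x y (+) [&& x != y, G x v & G y v].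

Definition pivot (T : finType) (G : rel T) (u v : T) : rel T :=
  lc (lc (lc G u) v) u.

(* Vertices of an m x m grid; the vertex with 1-indexed coordinates (i,j)
   (column i, row j) is the pair of ordinals (i-1, j-1). *)
Definition gvert (m : nat) : finType := ('I_m * 'I_m)%type.

Definition col (m : nat) (p : gvert m) : nat := (val p.1).+1.
Definition row (m : nat) (p : gvert m) : nat := (val p.2).+1.

Definition Xarc (m : nat) (p q : gvert m) : bool :=
  (col q == (col p).+1) && (row q <= row p).
Definition Xgraph (m : nat) : rel (gvert m) := fun p q => Xarc p q || Xarc q p.
Arguments Xgraph : clear implicits.

Definition Yarc (m : nat) (p q : gvert m) : bool :=
  let i := col p in let j := row p in let i' := col q in let j' := row q in
  [|| [&& odd i, i' == i.+1 & j' <= j],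
      [&& ~~ odd i, i' == i.+1 & j < j'],
      [&& ~~ odd i, odd i' & i.+3 <= i'] |
      [&& odd i, i' == i.-1 & j == 1]].
Definition Ygraph (m : nat) : rel (gvert m) := fun p q => Yarc p q || Yarc q p.
Arguments Ygraph : clear implicits.

Definition ovtx (m i j : nat) : option (gvert m) :=
  match (insub i.-1 : option 'I_m), (insub j.-1 : option 'I_m) with
  | Some a, Some b => Some (a, b)
  | _, _ => None
  end.
Arguments ovtx : clear implicits.

(* Pivot on (optional) vertices; does nothing if a vertex does not exist
   (which never happens in the theorem, since n >= 1). *)
Definition opivot (T : finType) (G : rel T) (u v : option T) : rel T :=
  match u, v with
  | Some a, Some b => pivot G a b
  | _, _ => G
  end.

Definition pivoted_X (n : nat) : rel (gvert n.*2) :=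
  foldl (fun G k => opivot G (ovtx (n.*2) (n.*2 - 2 * k).-1 1)
                             (ovtx (n.*2) (n.*2 - 2 * k) 1))
        (Xgraph (n.*2)) (iota 0 n).
Arguments pivoted_X : clear implicits.

Definition isomorphic (T : finType) (G H : rel T) : Prop :=
  exists f : T -> T, bijective f /\ forall x y, G x y = H (f x) (f y).

From mathcomp Require Import all_boot zify fingroup perm.
Set Implicit Arguments. Unset Strict Implicit. Unset Printing Implicit Defensive.

(* Once the pivots on the bottom-row pairs right of an even column c have been
   performed, the graph is X on the columns up to c and Y on the columns from c
   on, relabelled by [flip c], which exchanges x_{2k-1,1} and x_{2k,1} for all
   2k > c.  The next pivot, on u = x_{c-1,1} and v = x_{c,1}, swaps u and v and
   otherwise toggles exactly the adjacencies between column c-2 (the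
   neighbourhood of u) and the odd columns beyond it (that of v): this turns the
   X-edges between columns c-2 and c-1 into Y-edges of type (2) and creates the
   Y-edges of type (3) leaving column c-2, so the picture moves to c-2. *)

Section Pivot.
Variables (T : finType) (G : rel T).
Hypotheses (G_sym : symmetric G) (G_irr : irreflexive G).

Lemma edge_eqF u v : G u v -> (u == v) = false.
Proof. by apply: contraTF => /eqP->; rewrite G_irr. Qed.

Lemma pivotE u v x y : G u v -> pivot G u v x y =
  if x == u then (if y == u then false else if y == v then true else G v y)
  else if x == v then (if y == u then true else if y == v then false else G u y)
  else if y == u then G x v else if y == v then G x u
  else G x y (+) ((G x u && G y v) (+) (G x v && G y u)).
Proof.
move=> Guv; have Gvu : G v u by rewrite G_sym.
have uv := edge_eqF Guv; have vu := edge_eqF Gvu.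
rewrite /pivot /lc.
case: (eqVneq x u) => [->|/negbTE xu]; last case: (eqVneq x v) => [->|/negbTE xv];
case: (eqVneq y u) => [->|/negbTE yu]; try case: (eqVneq y v) => [->|/negbTE yv];
  rewrite ?eqxx ?uv ?vu ?(eq_sym y) ?(eq_sym u) ?(eq_sym v) ?xu ?xv ?yu ?yv
          ?G_irr ?Guv ?Gvu ?(G_sym u) ?(G_sym v) //=.
all: try (case: (eqVneq x y) => [<-|_]; rewrite ?G_irr /=).
all: by case: (G x u); case: (G x v); case: (G y u); case: (G y v); case: (G x y).
Qed.

Lemma pivot_tperm (H : rel T) u v : G u v -> symmetric H -> irreflexive H -> H u v ->
  (forall y, y != u -> y != v -> H u y = G u y /\ H v y = G v y) ->
  (forall x y, x != u -> x != v -> y != u -> y != v ->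
     H x y = G x y (+) ((G x u && G y v) (+) (G x v && G y u))) ->
  pivot G u v =2 (fun x y => H (tperm u v x) (tperm u v y)).
Proof.
move=> Guv H_sym H_irr Huv H_nbr H_int x y; rewrite pivotE //.
have uv := edge_eqF Guv; have vu : (v == u) = false by rewrite eq_sym.
case: tpermP => [->|->|/eqP xu /eqP xv]; case: tpermP => [->|->|/eqP yu /eqP yv];
  rewrite ?eqxx ?uv ?vu ?(negbTE xu) ?(negbTE xv) ?(negbTE yu) ?(negbTE yv)
          ?H_irr ?Huv ?(H_sym v u) //.
- by case: (H_nbr y yu yv).
- by case: (H_nbr y yu yv).
- by rewrite H_sym (G_sym x); case: (H_nbr x xu xv).
- by rewrite H_sym (G_sym x); case: (H_nbr x xu xv).
- by rewrite H_int.
Qed.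
End Pivot.

Lemma lc_eq2 (T : finType) (G1 G2 : rel T) w : G1 =2 G2 -> lc G1 w =2 lc G2 w.
Proof. by move=> eqG x y; rewrite /lc !eqG. Qed.

Lemma pivot_eq2 (T : finType) (G1 G2 : rel T) u v :
  G1 =2 G2 -> pivot G1 u v =2 pivot G2 u v.
Proof. by move=> eqG; do 3!apply: lc_eq2. Qed.

Lemma lc_relabel (T : finType) (G : rel T) (s : T -> T) w : injective s ->
  lc (fun x y => G (s x) (s y)) w =2 (fun x y => lc G (s w) (s x) (s y)).
Proof. by move=> s_inj x y; rewrite /lc (inj_eq s_inj). Qed.

Lemma pivot_relabel (T : finType) (G : rel T) (s : T -> T) u v : injective s ->
  pivot (fun x y => G (s x) (s y)) u v =2 (fun x y => pivot G (s u) (s v) (s x) (s y)).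
Proof.
move=> s_inj x y; rewrite /pivot.
rewrite (lc_eq2 u (lc_eq2 v (lc_relabel G u s_inj))).
by rewrite (lc_eq2 u (lc_relabel (lc G (s u)) v s_inj)) lc_relabel.
Qed.

Definition xadj (i j i' j' : nat) : bool :=
  ((i' == i.+1) && (j' <= j)) || ((i == i'.+1) && (j <= j')).

Definition yarc (i j i' j' : nat) : bool :=
  [|| [&& odd i, i' == i.+1 & j' <= j],
      [&& ~~ odd i, i' == i.+1 & j < j'],
      [&& ~~ odd i, odd i' & i.+3 <= i'] |
      [&& odd i, i' == i.-1 & j == 1]].

Definition yadj (i j i' j' : nat) : bool := yarc i j i' j' || yarc i' j' i j.

Definition xyadj (c i j i' j' : nat) : bool :=
  if (i <= c) && (i' <= c) then xadj i j i' j'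
  else if (i < c) || (i' < c) then false else yadj i j i' j'.

(* [lia] knows nothing about [odd]: a parity split records it as a remainder. *)
Ltac grid_split :=
  match goal with
  | |- context [odd ?t] => let E := fresh "E" in case E: (odd t) => /=;
       [have ? : t %% 2 = 1 by rewrite modn2 E | have ? : t %% 2 = 0 by rewrite modn2 E]; clear E
  | |- context [?a <= ?b] => case: (leqP a b) => ? /=
  | |- context [?a == ?b :> nat] => case: (eqVneq a b) => ? /=
  end; try (exfalso; lia).

Ltac grid_decide :=
  rewrite /xyadj /yadj /yarc /xadj; repeat grid_split; done.

Lemma xadj_sym i j i' j' : xadj i j i' j' = xadj i' j' i j.
Proof. by rewrite /xadj orbC. Qed.

Lemma yadj_sym i j i' j' : yadj i j i' j' = yadj i' j' i j.
Proof. by rewrite /yadj orbC. Qed.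

Lemma xadj_far i j i' j' : i.+1 < i' -> xadj i j i' j' = false.
Proof. move=> *; grid_decide. Qed.

Lemma xadj_next i j j' : xadj i j i.+1 j' = (j' <= j).
Proof. grid_decide. Qed.

Lemma xadj_same i j j' : xadj i j i j' = false.
Proof. grid_decide. Qed.

Lemma yadj_same i j j' : 0 < i -> yadj i j i j' = false.
Proof. move=> *; grid_decide. Qed.

Lemma yadj_next_odd i j j' : odd i -> yadj i j i.+1 j' = (j' <= j).
Proof. move=> *; grid_decide. Qed.

Lemma yadj_next_even i j j' : ~~ odd i -> yadj i j i.+1 j' = (j < j') || (j' == 1).
Proof. move=> *; grid_decide. Qed.

Lemma yadj_skip i j j' : yadj i j i.+2 j' = false.
Proof. grid_decide. Qed.

Lemma yadj_far_odd i j i' j' : odd i -> i.+1 < i' -> yadj i j i' j' = false.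
Proof. move=> *; grid_decide. Qed.

Lemma yadj_far_even i j i' j' : ~~ odd i -> i.+2 < i' -> yadj i j i' j' = odd i'.
Proof. move=> *; grid_decide. Qed.

Lemma xyadj_irr c i j : 0 < i -> xyadj c i j i j = false.
Proof. by move=> i0; rewrite /xyadj xadj_same yadj_same // !if_same. Qed.

Lemma xyadj_sym c i j i' j' : xyadj c i j i' j' = xyadj c i' j' i j.
Proof. by rewrite /xyadj andbC orbC xadj_sym yadj_sym. Qed.

Lemma xyadj_le c i j i' j' : i <= c -> i' <= c -> xyadj c i j i' j' = xadj i j i' j'.
Proof. by rewrite /xyadj => -> ->. Qed.

Lemma xyadj_ge c i j i' j' : 0 < i -> c <= i -> c <= i' -> xyadj c i j i' j' = yadj i j i' j'.
Proof.
rewrite /xyadj => i0 ci ci'; rewrite !ltnNge ci ci' /=; case: ifP => // /andP[ic i'c].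
have -> : i' = i by lia.
by rewrite xadj_same yadj_same.
Qed.

Lemma xyadj_cross c i j i' j' : i < c -> c < i' -> xyadj c i j i' j' = false.
Proof. by rewrite /xyadj => -> ci'; rewrite (leqNgt i') ci' andbF. Qed.

Definition mate (i : nat) : nat := if odd i then i.+1 else i.-1.

Definition toggle (b i i' : nat) : bool := (i == b) && (odd i' && (b < i')).

Lemma xyadj_shift (d i j i' j' : nat) : 0 < i -> 0 < i' ->
  (i, j) != (d.*2.+1, 1) -> (i', j') != (d.*2.+1, 1) ->
  xyadj d.*2 i j i' j' = xyadj d.*2.+2 i j i' j' (+) (toggle d.*2 i i' (+) toggle d.*2 i' i).
Proof.
wlog le_ii' : i j i' j' / i <= i' => [W|].
  move=> i0 i'0 u_ij u_ij'; case: (leqP i i') => [h|/ltnW h]; first exact: W.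
  by rewrite xyadj_sym (xyadj_sym d.*2.+2) [toggle _ _ _ (+) _]addbC; apply: W.
move=> i0 i'0 _ u_ij'; set b := d.*2.
have ob : odd b = false by rewrite odd_double.
have [le_i'b | lt_bi'] := leqP i' b.
  have le_ib := leq_trans le_ii' le_i'b.
  rewrite !xyadj_le; try lia.
  by rewrite /toggle !ltnNge le_i'b le_ib /= !andbF !addbF.
rewrite [toggle b i' i]/toggle (gtn_eqF lt_bi') addbF.
case: (ltngtP i b) => [lt_ib | lt_bi | eib].
- rewrite xyadj_cross // /toggle (ltn_eqF lt_ib).
  have lt_ib2 : i < b.+2 by lia.
  case: (leqP i' b.+2) => le_i'b2; last by rewrite xyadj_cross.
  by rewrite xyadj_le ?(ltnW lt_ib2) // xadj_far // (leq_ltn_trans lt_ib lt_bi').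
- rewrite xyadj_ge ?(ltnW lt_bi) ?(ltnW lt_bi') // /toggle (gtn_eqF lt_bi) addbF.
  case: (leqP i' b.+2) => le_i'b2.
    rewrite xyadj_le ?(leq_trans le_ii') //.
    case: (eqVneq i' i) => [->|ne_i'i]; first by rewrite xadj_same yadj_same.
    have [-> ->] : i = b.+1 /\ i' = b.+2 by lia.
    by rewrite xadj_next yadj_next_odd // oddS ob.
  case: (eqVneq i b.+1) => [->|ne_ib1].
    by rewrite xyadj_cross // yadj_far_odd // oddS ob.
  by rewrite xyadj_ge //; lia.
- subst i; rewrite xyadj_ge ?(ltnW lt_bi') // /toggle eqxx lt_bi' andbT.
  have [eb1|[->|lt_b2i']] : i' = b.+1 \/ i' = b.+2 \/ b.+2 < i' by lia.
  + move: u_ij'; rewrite eb1 xpair_eqE eqxx /= => /negbTE j'1.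
    rewrite yadj_next_even ?ob // j'1 orbF xyadj_le; try lia.
    by rewrite xadj_next ltnNge; case: (j' <= j).
  + rewrite yadj_skip xyadj_le; try lia.
    by rewrite xadj_far // !oddS ob.
  + by rewrite yadj_far_even ?ob // xyadj_cross.
Qed.

Lemma xyadj_u (d i j : nat) : 0 < i -> 0 < j ->
  (i, j) != (d.*2.+1, 1) -> (i, j) != (d.*2.+2, 1) ->
  xyadj d.*2.+2 i j d.*2.+1 1 = (i == d.*2).
Proof. rewrite !xpair_eqE => *; grid_decide. Qed.

Lemma xyadj_v (d i j : nat) : 0 < i -> 0 < j ->
  (i, j) != (d.*2.+1, 1) -> (i, j) != (d.*2.+2, 1) ->
  xyadj d.*2.+2 i j d.*2.+2 1 = odd i && (d.*2 < i).
Proof. rewrite !xpair_eqE => *; grid_decide. Qed.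

Lemma xyadj_u_shift (d i j : nat) : 0 < i -> 0 < j ->
  (i, j) != (d.*2.+1, 1) -> (i, j) != (d.*2.+2, 1) ->
  xyadj d.*2 d.*2.+1 1 i j = xyadj d.*2.+2 d.*2.+1 1 i j.
Proof. rewrite !xpair_eqE => *; grid_decide. Qed.

Lemma xyadj_v_shift (d i j : nat) : 0 < i -> 0 < j ->
  (i, j) != (d.*2.+1, 1) -> (i, j) != (d.*2.+2, 1) ->
  xyadj d.*2 d.*2.+2 1 i j = xyadj d.*2.+2 d.*2.+2 1 i j.
Proof. rewrite !xpair_eqE => *; grid_decide. Qed.

Lemma mateK i : 0 < i -> mate (mate i) = i.
Proof.
by case: i => // i _; rewrite /mate /=; case: (boolP (odd i)) => oi; rewrite /= ?oi ?negbK.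
Qed.

Lemma mate_gt d i : d.*2 < i -> d.*2 < mate i.
Proof.
rewrite /mate; case: ifP => [_ /ltnW //|odd_i lt_di].
have : i != d.*2.+1 by apply: contraFneq odd_i => ->; rewrite /= odd_double.
lia.
Qed.

Section Grid.
Variable m : nat.

Lemma gvert_eqE (p q : gvert m) : (p == q) = ((col p, row p) == (col q, row q)).
Proof. by rewrite /col /row !xpair_eqE !eqSS !val_eqE. Qed.

Lemma gvertP (p q : gvert m) : col p = col q -> row p = row q -> p = q.
Proof. by move=> ep eq; apply/eqP; rewrite gvert_eqE ep eq. Qed.

Lemma col_le (p : gvert m) : col p <= m. Proof. exact: ltn_ord. Qed.

Definition XYgraph (c : nat) : rel (gvert m) :=
  fun p q => xyadj c (col p) (row p) (col q) (row q).

Lemma XYgraph_sym c : symmetric (XYgraph c).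
Proof. by move=> p q; rewrite /XYgraph xyadj_sym. Qed.

Lemma XYgraph_irr c : irreflexive (XYgraph c).
Proof. by move=> p; rewrite /XYgraph xyadj_irr. Qed.

Lemma XYgraph_Xgraph : XYgraph m =2 Xgraph m.
Proof. by move=> p q; rewrite /XYgraph xyadj_le ?col_le. Qed.

Lemma XYgraph_Ygraph : XYgraph 0 =2 Ygraph m.
Proof. by move=> p q; rewrite /XYgraph xyadj_ge. Qed.

Lemma pivot_XYgraph d (u v : gvert m) :
  col u = d.*2.+1 -> row u = 1 -> col v = d.*2.+2 -> row v = 1 ->
  pivot (XYgraph d.*2.+2) u v =2 (fun x y => XYgraph d.*2 (tperm u v x) (tperm u v y)).
Proof.
move=> cu ru cv rv.
have off_uv x : x != u -> x != v ->
    (col x, row x) != (d.*2.+1, 1) /\ (col x, row x) != (d.*2.+2, 1).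
  by rewrite !gvert_eqE cu ru cv rv.
apply: pivot_tperm; try exact: XYgraph_sym; try exact: XYgraph_irr.
- by rewrite /XYgraph cu ru cv rv xyadj_le // xadj_next.
- rewrite /XYgraph cu ru cv rv xyadj_ge; try lia.
  by rewrite yadj_next_odd // oddS odd_double.
- move=> y yu yv; have [uy vy] := off_uv y yu yv.
  by rewrite /XYgraph cu ru cv rv xyadj_u_shift // xyadj_v_shift.
- move=> x y xu xv yu yv; have [ux vx] := off_uv x xu xv; have [uy vy] := off_uv y yu yv.
  rewrite /XYgraph cu ru cv rv xyadj_shift //.
  by rewrite !xyadj_u // !xyadj_v // /toggle [odd (col x) && _ && _]andbC.
Qed.

Hypothesis m_even : ~~ odd m.

(* Ordinals are 0-indexed, hence the [.-1]. *)
Definition flip (c : nat) (p : gvert m) : gvert m :=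
  if (row p == 1) && (c < col p) then (insubd p.1 (mate (col p)).-1, p.2) else p.

Lemma row_flip c p : row (flip c p) = row p.
Proof. by rewrite /flip; case: ifP. Qed.

Lemma col_flip c p :
  col (flip c p) = if (row p == 1) && (c < col p) then mate (col p) else col p.
Proof.
case: p => [[a a_lt] b]; rewrite /flip /col /row /=; case: ifP => // _.
rewrite val_insubd /mate /=; case: (boolP (odd a)) => odd_a /=.
  have a_gt0 : 0 < a by case: a odd_a {a_lt}.
  by rewrite ifT ?prednK // ltnW.
have a1_neq : a.+1 != m by apply: contraNneq m_even => <- /=.
by rewrite ifT // ltn_neqAle a1_neq a_lt.
Qed.

Lemma flip_id c p : col p <= c -> flip c p = p.
Proof. by rewrite /flip ltnNge => ->; rewrite andbF. Qed.

Lemma flipK d : involutive (flip d.*2).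
Proof.
move=> p; apply: gvertP; last by rewrite !row_flip.
rewrite !col_flip row_flip; case: (row p == 1) => //=.
case: (ltnP d.*2 (col p)) => [lt_dp|le_pd]; last by rewrite ltnNge le_pd.
by rewrite (mate_gt lt_dp) mateK.
Qed.

Lemma flip_tperm d (u v x : gvert m) :
  col u = d.*2.+1 -> row u = 1 -> col v = d.*2.+2 -> row v = 1 ->
  tperm u v (flip d.*2.+2 x) = flip d.*2 x.
Proof.
move=> cu ru cv rv.
have flipK2 : involutive (flip d.*2.+2) := flipK d.+1.
have fix_u : flip d.*2.+2 u = u by rewrite flip_id // cu.
have fix_v : flip d.*2.+2 v = v by rewrite flip_id // cv.
case: tpermP => [xu|xv|xu xv].
- have -> : x = u by rewrite -(flipK2 x) xu fix_u.
  apply: gvertP; last by rewrite row_flip ru rv.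
  by rewrite col_flip ru cu cv ltnSn /mate /= odd_double.
- have -> : x = v by rewrite -(flipK2 x) xv fix_v.
  apply: gvertP; last by rewrite row_flip ru rv.
  by rewrite col_flip rv cu cv (ltnW (ltnSn _)) /mate /= odd_double.
case: (eqVneq (row x) 1) => [rx|/negbTE rx]; last by rewrite /flip rx.
case: (ltnP d.*2.+2 (col x)) => [lt_vx|le_xv].
  by rewrite /flip rx eqxx lt_vx (ltnW (ltnW lt_vx)).
case: (ltnP d.*2 (col x)) => [lt_ux|le_xu]; last by rewrite !flip_id //; lia.
rewrite flip_id // in xu xv; exfalso.
have [cx|cx] : col x = d.*2.+1 \/ col x = d.*2.+2 by lia.
  by apply: xu; apply: gvertP; rewrite ?cx ?cu ?rx ?ru.
by apply: xv; apply: gvertP; rewrite ?cx ?cv ?rx ?rv.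
Qed.

Lemma pivot_flipped_XYgraph d (u v : gvert m) :
  col u = d.*2.+1 -> row u = 1 -> col v = d.*2.+2 -> row v = 1 ->
  pivot (fun x y => XYgraph d.*2.+2 (flip d.*2.+2 x) (flip d.*2.+2 y)) u v =2
  (fun x y => XYgraph d.*2 (flip d.*2 x) (flip d.*2 y)).
Proof.
move=> cu ru cv rv x y.
have flip_inj : injective (flip d.*2.+2) := can_inj (flipK d.+1).
rewrite pivot_relabel // [flip _ u]flip_id ?cu // [flip _ v]flip_id ?cv //.
by rewrite pivot_XYgraph // !(flip_tperm _ cu ru cv rv).
Qed.
End Grid.

Lemma ovtxP m i j : 0 < i <= m -> 0 < j <= m ->
  exists2 p, ovtx m i j = Some p & col p = i /\ row p = j.
Proof.
move=> /andP[i_gt0 le_im] /andP[j_gt0 le_jm]; rewrite /ovtx.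
case: insubP => [a _ ea|/negP[]]; last lia.
case: insubP => [b _ eb|/negP[]]; last lia.
by exists (a, b); rewrite // /col /row ea eb; split; lia.
Qed.

Theorem lemma12 (n : nat) : 1 <= n -> isomorphic (pivoted_X n) (Ygraph (n.*2)).
Proof.
move=> n_gt0; have m_even : ~~ odd n.*2 by rewrite odd_double.
pose step G k := opivot G (ovtx n.*2 (n.*2 - 2 * k).-1 1) (ovtx n.*2 (n.*2 - 2 * k) 1).
have stage k : k <= n -> foldl step (Xgraph n.*2) (iota 0 k) =2
    (fun x y => XYgraph (n - k).*2 (flip (n - k).*2 x) (flip (n - k).*2 y)).
  elim: k => [|k IH] le_kn.
    by move=> x y; rewrite subn0 !flip_id ?col_le // XYgraph_Xgraph.
  have [d ed] : exists d, n - k = d.+1 by exists (n - k).-1; lia.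
  have [u eu [cu ru]] := @ovtxP n.*2 d.*2.+1 1 ltac:(lia) ltac:(lia).
  have [v ev [cv rv]] := @ovtxP n.*2 d.*2.+2 1 ltac:(lia) ltac:(lia).
  have -> : n - k.+1 = d by lia.
  move=> x y; rewrite -addn1 iotaD foldl_cat /= /step.
  have -> : n.*2 - 2 * k = d.*2.+2 by lia.
  rewrite eu ev /= (pivot_eq2 u v (IH (ltnW le_kn))) ed doubleS.
  exact: pivot_flipped_XYgraph.
exists (flip 0); split; first exact: inv_bij (flipK m_even 0).
by move=> x y; rewrite /pivoted_X -/step stage // subnn double0 XYgraph_Ygraph.
Qed.
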